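(* Let $(X,d)$ be a compact metric space and let $(X,f)$ be a flow or a semiflow on $X$ that has the weak reparametrized gluing orbit property. Then either $(X,f)$ is minimal, or $(X,f)$ has positive topological entropy, i.e. $h(f)>0$.
   Context: A flow (resp. semiflow) on $X$ is a continuous family $\{f^t\}$ of continuous maps $X\to X$ indexed by $t\in\mathbb{R}$ (resp. $t\in[0,\infty)$) with $f^0=\mathrm{id}$ and $f^{t+s}=f^t\circ f^s$. $(X,f)$ is minimal if for every $x\in X$ the forward orbit $\{f^t(x):t\ge 0\}$ is dense in $X$. $h(f)$ denotes the topological entropy of the flow/semiflow (defined via maximal cardinalities of $(t,\epsilon)$-separated sets). For $L\ge 1$, an $L$-reparametrization is a strictly increasing continuous function $\gamma:[0,\infty)\to[0,\infty)$ with $\gamma(0)=0$ and $L^{-1}\le \frac{\gamma(t_1)-\gamma(t_2)}{t_1-t_2}\le L$ for all $t_1\ne t_2$ in $[0,\infty)$. An orbit sequence of rank $k$ is a finite sequence $\mathscr{C}=\{(x_j,m_j)\in X\times[0,\infty):j=1,\dots,k\}$. A gap for it is a $(k-1)$-tuple $\mathscr{g}=\{t_j\in[0,\infty):j=1,\dots,k-1\}$. Given a reparametrization $\gamma$ and $\epsilon>0$, $(\mathscr{C},\mathscr{g},\gamma)$ is $\epsilon$-shadowed by $z\in X$ if for every $j=1,\dots,k$ and every $t\in[0,m_j]$ one has $d(f^{\gamma(s_j+t)}(z),f^t(x_j))<\epsilon$, where $s_1=0$ and $s_j=\sum_{i=1}^{j-1}(m_i+t_i)$ for $j\ge2$. $(X,f)$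 has the weak reparametrized gluing orbit property if for every $\epsilon>0$ there is $M=M(\epsilon)>0$ such that for every orbit sequence $\mathscr{C}$ there exist a gap $\mathscr{g}$ with $\max\mathscr{g}\le M$ and an $M$-reparametrization $\gamma$ such that $(\mathscr{C},\mathscr{g},\gamma)$ is $\epsilon$-shadowed by some point of $X$. *)

From Stdlib Require Import Reals Lra List.
Open Scope R_scope.

Definition is_metric {X : Type} (d : X -> X -> R) : Prop :=
  (forall x y, 0 <= d x y) /\
  (forall x y, d x y = 0 <-> x = y) /\
  (forall x y, d x y = d y x) /\
  (forall x y z, d x z <= d x y + d y z).

Definition is_open {X : Type} (d : X -> X -> R) (U : X -> Prop) : Prop :=
  forall x, U x -> exists r, 0 < r /\ forall y, d x y < r -> U y.

Definition compact_metric {X : Type} (d : X -> X -> R) : Prop :=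
  forall (I : Type) (U : I -> X -> Prop),
    (forall i, is_open d (U i)) ->
    (forall x, exists i, U i x) ->
    exists l : list I, forall x, exists i, In i l /\ U i x.

(* f t is only meaningful for t >= 0; values at t < 0 are irrelevant. *)
Definition is_semiflow {X : Type} (d : X -> X -> R) (f : R -> X -> X) : Prop :=
  (forall x, f 0 x = x) /\
  (forall t s x, 0 <= t -> 0 <= s -> f (t + s) x = f t (f s x)) /\
  (forall t x, 0 <= t -> forall eps, 0 < eps ->
     exists delta, 0 < delta /\
       forall t' x', 0 <= t' -> Rabs (t' - t) < delta -> d x' x < delta ->
         d (f t' x') (f t x) < eps).

Definition minimal {X : Type} (d : X -> X -> R) (f : R -> X -> X) : Prop :=
  forall x y eps, 0 < eps -> exists t, 0 <= t /\ d (f t x) y < eps.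

Definition separated {X : Type} (d : X -> X -> R) (f : R -> X -> X)
  (t eps : R) (E : list X) : Prop :=
  NoDup E /\
  forall x y, In x E -> In y E -> x <> y ->
    exists s, 0 <= s <= t /\ eps < d (f s x) (f s y).

(* h(f) = sup_{eps>0} limsup_{t->oo} (1/t) log s(t,eps), where s(t,eps) is the
   maximal cardinality of a (t,eps)-separated set.  h(f) > 0 unfolds to:
   for some eps > 0, limsup_{t->oo} (1/t) log s(t,eps) > 0, i.e. there is c > 0
   with s(t,eps) > exp(c t) for arbitrarily large t. *)
Definition positive_entropy {X : Type} (d : X -> X -> R) (f : R -> X -> X) : Prop :=
  exists eps, 0 < eps /\ exists c, 0 < c /\
    forall T, exists t, T <= t /\ 0 < t /\
      exists E, separated d f t eps E /\ exp (c * t) < INR (length E).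

Definition reparametrization (L : R) (gamma : R -> R) : Prop :=
  gamma 0 = 0 /\
  (forall t1 t2, 0 <= t1 -> t1 < t2 -> gamma t1 < gamma t2) /\
  (forall t1 t2, 0 <= t1 -> 0 <= t2 -> t1 <> t2 ->
     / L <= (gamma t1 - gamma t2) / (t1 - t2) <= L) /\
  (forall t, 0 <= t -> 0 <= gamma t).

(* s_1 = 0, s_{j+1} = s_j + m_j + t_j  (0-based indices) *)
Fixpoint shift (m g : nat -> R) (j : nat) : R :=
  match j with
  | O => 0
  | S i => shift m g i + m i + g i
  end.

(* orbit sequence {(x_j, m_j) : j < k}, gap {g_j : j < k-1} *)
Definition shadowed {X : Type} (d : X -> X -> R) (f : R -> X -> X)
  (k : nat) (x : nat -> X) (m g : nat -> R) (gamma : R -> R) (eps : R) (z : X) : Prop :=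
  forall j, (j < k)%nat -> forall t, 0 <= t <= m j ->
    d (f (gamma (shift m g j + t)) z) (f t (x j)) < eps.

Definition weak_reparam_gluing {X : Type} (d : X -> X -> R) (f : R -> X -> X) : Prop :=
  forall eps, 0 < eps -> exists M, 0 < M /\
    forall (k : nat) (x : nat -> X) (m : nat -> R),
      (1 <= k)%nat -> (forall j, (j < k)%nat -> 0 <= m j) ->
      exists (g : nat -> R) (gamma : R -> R) (z : X),
        (forall j, (j + 1 < k)%nat -> 0 <= g j <= M) /\
        reparametrization M gamma /\
        shadowed d f k x m g gamma eps z.

From Stdlib Require Import Reals Lra Lia List ClassicalEpsilon Classical.
Open Scope R_scope.

(* Assume the semiflow is not minimal: some forward orbit of a
   point x0 stays at distance >= e0 from a point y0.  Fix eps = e0/3 and the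
   gluing constant M for eps.  For a binary word b of length n, glue the orbit
   sequence  y0, x0 (for time len (b 0)), y0, x0 (for time len (b 1)), ..., y0,
   where the y0-pieces have length 0 and len takes two very different values.
   A shadowing point z of this sequence has "visit times" tau 0 = 0 < tau 1 <
   ... < tau n at which it is eps-close to y0, and between consecutive visits
   (up to a margin M*M caused by the gaps) it is 2eps-far from y0, because it
   follows the x0-orbit there.  The spacing tau (i+1) - tau i is controlled by
   the bit b i.  A purely arithmetic interleaving argument shows that two such
   schedules which never put a visit of one point into a far window of the
   other must carry the same word; hence the 2^n shadowing points of distinct
   words are (n*H, eps)-separated, which gives exponential growth and positive
   entropy. *)

(* The reverse triangle inequality: it turns "close to y0" and "far from y0"
   into lower bounds on the distance between two points. *)
Lemma metric_reverse_triangle {X : Type} (d : X -> X -> R) (p q y : X) :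
  is_metric d -> d q y - d p q <= d p y.
Proof.
  intros (_ & _ & Hsym & Htri). pose proof (Htri q p y). rewrite (Hsym q p) in *. lra.
Qed.

Lemma metric_self {X : Type} (d : X -> X -> R) (x : X) : is_metric d -> d x x = 0.
Proof. intros (_ & Hzero & _). now apply Hzero. Qed.

Lemma metric_sym {X : Type} (d : X -> X -> R) (x y : X) : is_metric d -> d x y = d y x.
Proof. intros (_ & _ & Hsym & _). apply Hsym. Qed.

Lemma lipschitz_continuity (h : R -> R) (K : R) :
  0 < K -> (forall u v, Rabs (h u - h v) <= K * Rabs (u - v)) -> continuity h.
Proof.
  intros HK Hlip p. unfold continuity_pt, continue_in, limit1_in, limit_in.
  intros e He. exists (e / K). split; [apply Rdiv_lt_0_compat; lra|].
  intros x [_ Hx]. simpl in *. unfold R_dist in *.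
  eapply Rle_lt_trans; [apply Hlip|].
  apply (Rmult_lt_compat_l K) in Hx; [|lra].
  replace (K * (e / K)) with e in Hx by (field; lra). exact Hx.
Qed.

Lemma Rmax0_nonexpansive (u v : R) : Rabs (Rmax 0 u - Rmax 0 v) <= Rabs (u - v).
Proof. unfold Rmax, Rabs; repeat destruct Rle_dec; repeat destruct Rcase_abs; lra. Qed.

Section Reparametrization.
Variables (M : R) (gamma : R -> R).
Hypotheses (HM : 0 < M) (Hgamma : reparametrization M gamma).

Lemma reparam_increment (a b : R) :
  0 <= a -> a <= b -> (b - a) / M <= gamma b - gamma a <= M * (b - a).
Proof.
  intros Ha Hab. destruct (Req_dec a b) as [<-|Hne].
  { replace ((a - a) / M) with 0 by (field; lra). lra. }
  destruct Hgamma as (_ & _ & Hratio & _).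
  destruct (Hratio b a) as [Hlo Hhi]; try lra.
  set (r := (gamma b - gamma a) / (b - a)) in *.
  assert (Hr : gamma b - gamma a = r * (b - a)) by (unfold r; field; lra).
  rewrite Hr. unfold Rdiv.
  split; [rewrite Rmult_comm|]; apply Rmult_le_compat_r; lra.
Qed.

Lemma reparam_lipschitz (u v : R) :
  0 <= u -> 0 <= v -> Rabs (gamma u - gamma v) <= M * Rabs (u - v).
Proof.
  intros Hu Hv. destruct (Rle_dec u v) as [Huv|Hvu].
  - pose proof (reparam_increment u v Hu Huv) as [Hlo Hhi].
    assert (0 <= (v - u) / M)
      by (unfold Rdiv; apply Rmult_le_pos; [lra|left; apply Rinv_0_lt_compat; lra]).
    rewrite Rabs_left1, (Rabs_left1 (u - v)) by lra. lra.
  - pose proof (reparam_increment v u Hv ltac:(lra)) as [Hlo Hhi].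
    assert (0 <= (u - v) / M)
      by (unfold Rdiv; apply Rmult_le_pos; [lra|left; apply Rinv_0_lt_compat; lra]).
    rewrite Rabs_right, (Rabs_right (u - v)) by lra. lra.
Qed.

(* Intermediate values: every time between gamma a and gamma b is attained
   on [a, b]; this is how a point of the shadowing orbit is matched with a
   point of the shadowed segment. *)
Lemma reparam_ivt (a b s : R) :
  0 <= a <= b -> gamma a <= s <= gamma b -> exists u, a <= u <= b /\ gamma u = s.
Proof.
  intros Hab [Has Hsb].
  destruct (Rle_lt_or_eq_dec _ _ Has) as [Has'|<-]; [|exists a; split; [lra|reflexivity]].
  destruct (Rle_lt_or_eq_dec _ _ Hsb) as [Hsb' | ->]; [|exists b; split; [lra|reflexivity]].
  destruct (Rle_lt_or_eq_dec _ _ (proj2 Hab)) as [Hlt|<-]; [|lra].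
  set (h u := gamma (Rmax 0 u) - s).
  assert (Hcont : continuity h).
  { apply (lipschitz_continuity h M HM). intros u v. unfold h.
    replace (gamma (Rmax 0 u) - s - (gamma (Rmax 0 v) - s))
      with (gamma (Rmax 0 u) - gamma (Rmax 0 v)) by ring.
    eapply Rle_trans; [apply reparam_lipschitz; apply Rmax_l|].
    apply Rmult_le_compat_l; [lra|apply Rmax0_nonexpansive]. }
  assert (Hclamp : forall u, 0 <= u -> h u = gamma u - s)
    by (intros u Hu; unfold h; now rewrite Rmax_right).
  destruct (IVT h a b Hcont Hlt) as [u [Hu Hzero]];
    [rewrite Hclamp by lra; lra | rewrite Hclamp by lra; lra |].
  exists u. split; [exact Hu|]. rewrite Hclamp in Hzero by lra. lra.
Qed.

End Reparametrization.

Lemma shift_nonneg (m g : nat -> R) (N : nat) :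
  (forall j, (j < N)%nat -> 0 <= m j /\ 0 <= g j) ->
  forall j, (j <= N)%nat -> 0 <= shift m g j.
Proof.
  intros Hmg j. induction j as [|j IH]; intros Hj; simpl; [lra|].
  destruct (Hmg j) as [Hm Hg]; [lia|]. specialize (IH ltac:(lia)). lra.
Qed.

Lemma shift_succ (m g : nat -> R) (j : nat) : shift m g (S j) = shift m g j + m j + g j.
Proof. reflexivity. Qed.

Lemma testbit_high (k n i : nat) : (k < 2 ^ n)%nat -> (n <= i)%nat -> Nat.testbit k i = false.
Proof.
  intros Hk Hi. pose proof (Nat.testbit_spec' k i) as E.
  rewrite Nat.div_small in E.
  - simpl in E. destruct (Nat.testbit k i); simpl in E; [discriminate|reflexivity].
  - eapply Nat.lt_le_trans; [exact Hk|]. apply Nat.pow_le_mono_r; lia.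
Qed.

Lemma testbit_distinct (k k' n : nat) :
  (k < 2 ^ n)%nat -> (k' < 2 ^ n)%nat -> k <> k' ->
  exists i, (i < n)%nat /\ Nat.testbit k i <> Nat.testbit k' i.
Proof.
  intros Hk Hk' Hne. apply NNPP. intros Hsame. apply Hne, Nat.bits_inj. intros i.
  destruct (Nat.lt_ge_cases i n) as [Hi|Hi].
  - destruct (Bool.bool_dec (Nat.testbit k i) (Nat.testbit k' i)) as [|Hdiff]; [assumption|].
    exfalso. apply Hsame. eauto.
  - rewrite !(testbit_high _ n i) by assumption. reflexivity.
Qed.

Lemma separated_of_indexed {X : Type} (d : X -> X -> R) (f : R -> X -> X)
  (Z : nat -> X) (N : nat) (t eps : R) :
  is_metric d -> 0 <= eps ->
  (forall k k', (k < N)%nat -> (k' < N)%nat -> k <> k' ->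
     exists s, 0 <= s <= t /\ eps < d (f s (Z k)) (f s (Z k'))) ->
  separated d f t eps (map Z (seq 0 N)).
Proof.
  intros Hd Heps Hsep. split.
  - apply NoDup_map_NoDup_ForallPairs; [|apply seq_NoDup].
    intros k k' Hk Hk' HZ. apply in_seq in Hk, Hk'.
    destruct (Nat.eq_dec k k') as [|Hne]; [assumption|exfalso].
    destruct (Hsep k k' ltac:(lia) ltac:(lia) Hne) as [s [_ Hs]].
    rewrite HZ, metric_self in Hs by exact Hd. lra.
  - intros x y Hx Hy Hxy.
    apply in_map_iff in Hx as [k [<- Hk]]. apply in_map_iff in Hy as [k' [<- Hk']].
    apply in_seq in Hk, Hk'. apply Hsep; try lia. intros ->. now apply Hxy.
Qed.

Lemma exponential_separation_entropy {X : Type} (d : X -> X -> R) (f : R -> X -> X)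
  (eps H : R) :
  0 < eps -> 0 < H ->
  (forall n, exists E, separated d f (INR n * H) eps E /\ length E = (2 ^ n)%nat) ->
  positive_entropy d f.
Proof.
  intros Heps HH Hfam.
  assert (Hln2 : 0 < ln 2) by (rewrite <- ln_1; apply ln_increasing; lra).
  exists eps. split; [exact Heps|].
  exists (ln 2 / (2 * H)). split; [apply Rdiv_lt_0_compat; lra|].
  intros T. destruct (INR_unbounded (Rmax 1 (T / H))) as [n Hn].
  pose proof (Rmax_l 1 (T / H)). pose proof (Rmax_r 1 (T / H)).
  destruct (Hfam n) as [E [Hsep Hlen]].
  exists (INR n * H). split; [|split].
  - assert (Hscale : T / H * H <= INR n * H) by (apply Rmult_le_compat_r; lra).
    replace (T / H * H) with T in Hscale by (field; lra). exact Hscale.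
  - apply Rmult_lt_0_compat; lra.
  - exists E. split; [exact Hsep|].
    rewrite Hlen, pow_INR. replace (INR 2) with 2 by (simpl; lra).
    rewrite <- Rpower_pow by lra. apply exp_increasing.
    replace (ln 2 / (2 * H) * (INR n * H)) with (INR n * ln 2 / 2) by (field; lra).
    assert (0 < INR n * ln 2) by (apply Rmult_lt_0_compat; lra). lra.
Qed.

Lemma not_minimal_far_orbit {X : Type} (d : X -> X -> R) (f : R -> X -> X) :
  ~ minimal d f ->
  exists x0 y0 e0, 0 < e0 /\ forall t, 0 <= t -> e0 <= d (f t x0) y0.
Proof.
  intros Hnot. apply NNPP. intros Hnone. apply Hnot. intros x y e He.
  apply NNPP. intros Hnever. apply Hnone. exists x, y, e. split; [exact He|].
  intros t Ht. apply Rnot_lt_le. intros Hclose. apply Hnever. eauto.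
Qed.

Section Visit_Schedules.
Variables (X : Type) (d : X -> X -> R) (f : R -> X -> X) (y0 : X) (eps Q : R)
  (lo hi : bool -> R).

Definition visit_schedule (n : nat) (b : nat -> bool) (z : X) (tau : nat -> R) : Prop :=
  tau 0%nat = 0 /\
  (forall i, (i < n)%nat -> lo (b i) <= tau (S i) - tau i <= hi (b i)) /\
  (forall i, (i <= n)%nat -> d (f (tau i) z) y0 < eps) /\
  (forall i, (i < n)%nat -> forall s, tau i + Q < s < tau (S i) - Q -> 2 * eps < d (f s z) y0).

Hypotheses (HQ : 0 <= Q) (Hlo : forall c, 2 * Q < lo c) (Hgap : 2 * Q + hi false < lo true).

Lemma interleaved_step (a a' e e' : R) (c c' : bool) :
  a' - Q <= a <= a' + Q ->
  lo c <= e - a <= hi c -> lo c' <= e' - a' <= hi c' ->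
  ~ (a' + Q < e < e' - Q) -> ~ (a + Q < e' < e - Q) ->
  c = c' /\ e' - Q <= e <= e' + Q.
Proof.
  intros Hclose Hstep Hstep' Hout Hout'.
  pose proof (Hlo true). pose proof (Hlo false).
  destruct c, c'; (split; [reflexivity || (exfalso; lra) | lra]).
Qed.

Lemma schedules_code_agree (n : nat) (b b' : nat -> bool) (tau tau' : nat -> R) :
  tau 0%nat = 0 -> tau' 0%nat = 0 ->
  (forall i, (i < n)%nat -> lo (b i) <= tau (S i) - tau i <= hi (b i)) ->
  (forall i, (i < n)%nat -> lo (b' i) <= tau' (S i) - tau' i <= hi (b' i)) ->
  (forall i, (i < n)%nat -> ~ (tau' i + Q < tau (S i) < tau' (S i) - Q)) ->
  (forall i, (i < n)%nat -> ~ (tau i + Q < tau' (S i) < tau (S i) - Q)) ->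
  forall i, (i < n)%nat -> b i = b' i.
Proof.
  intros H0 H0' Hstep Hstep' Hout Hout'.
  assert (Hprefix : forall j, (j <= n)%nat ->
            (forall i, (i < j)%nat -> b i = b' i) /\ tau' j - Q <= tau j <= tau' j + Q).
  { induction j as [|j IH]; intros Hj.
    - split; [intros; lia|]. rewrite H0, H0'. lra.
    - destruct IH as [Hagree Hclose]; [lia|].
      destruct (interleaved_step (tau j) (tau' j) (tau (S j)) (tau' (S j)) (b j) (b' j))
        as [Hbit Hclose']; auto with arith.
      split; [|exact Hclose'].
      intros i Hi. destruct (Nat.eq_dec i j) as [->|]; [exact Hbit|apply Hagree; lia]. }
  intros i Hi. exact (proj1 (Hprefix n (le_n n)) i Hi).
Qed.

Lemma schedule_bounded (H : R) (n : nat) (b : nat -> bool) (z : X) (tau : nat -> R) :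
  (forall c, hi c <= H) -> visit_schedule n b z tau ->
  forall j, (j <= n)%nat -> 0 <= tau j <= INR n * H.
Proof.
  intros HH (H0 & Hstep & _).
  assert (Hgrow : forall j, (j <= n)%nat -> 0 <= tau j <= INR j * H).
  { induction j as [|j IH]; intros Hj; [rewrite H0; simpl; lra|].
    specialize (IH ltac:(lia)). pose proof (Hstep j ltac:(lia)).
    pose proof (Hlo (b j)). pose proof (HH (b j)). rewrite S_INR. lra. }
  intros j Hj. pose proof (Hgrow j Hj).
  destruct (Nat.eq_dec n 0) as [->|Hn]; [replace j with 0%nat in * by lia; lra|].
  assert (0 <= H) by (pose proof (Hstep 0%nat ltac:(lia)); pose proof (Hlo (b 0%nat));
                      pose proof (HH (b 0%nat)); lra).
  assert (INR j * H <= INR n * H) by (apply Rmult_le_compat_r; [lra|apply le_INR; exact Hj]).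
  lra.
Qed.

(* Two points with schedules for different words are (n*H, eps)-separated:
   otherwise no visit of one could lie in a far window of the other. *)
Lemma schedules_separate (H : R) (n : nat) (b b' : nat -> bool) (z z' : X)
  (tau tau' : nat -> R) :
  is_metric d -> (forall c, hi c <= H) ->
  visit_schedule n b z tau -> visit_schedule n b' z' tau' ->
  (exists i, (i < n)%nat /\ b i <> b' i) ->
  exists s, 0 <= s <= INR n * H /\ eps < d (f s z) (f s z').
Proof.
  intros Hd HH Hz Hz' [i0 [Hi0 Hdiff]].
  apply NNPP. intros Hnot.
  assert (Hclose : forall s, 0 <= s <= INR n * H -> d (f s z) (f s z') <= eps).
  { intros s Hs. apply Rnot_lt_le. intros Hlt. apply Hnot. eauto. }
  pose proof (schedule_bounded H n b z tau HH Hz) as Hbd.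
  pose proof (schedule_bounded H n b' z' tau' HH Hz') as Hbd'.
  destruct Hz as (H0 & Hstep & Hnear & Hfar).
  destruct Hz' as (H0' & Hstep' & Hnear' & Hfar').
  apply Hdiff. apply (schedules_code_agree n b b' tau tau'); auto.
  - intros i Hi Hwin.
    pose proof (Hfar' i Hi _ Hwin). pose proof (Hnear (S i) Hi).
    pose proof (Hclose _ (Hbd (S i) Hi)).
    pose proof (metric_reverse_triangle d (f (tau (S i)) z) (f (tau (S i)) z') y0 Hd).
    lra.
  - intros i Hi Hwin.
    pose proof (Hfar i Hi _ Hwin). pose proof (Hnear' (S i) Hi).
    pose proof (Hclose _ (Hbd' (S i) Hi)).
    pose proof (metric_reverse_triangle d (f (tau' (S i)) z') (f (tau' (S i)) z) y0 Hd).
    rewrite (metric_sym d (f (tau' (S i)) z') (f (tau' (S i)) z)) in * by exact Hd.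
    lra.
Qed.

End Visit_Schedules.

Section Coded_Orbits.
Variables (X : Type) (d : X -> X -> R) (f : R -> X -> X) (x0 y0 : X) (e0 M : R)
  (len : bool -> R).
Hypotheses (Hd : is_metric d) (Hf0 : forall x, f 0 x = x)
  (Hfar : forall t, 0 <= t -> e0 <= d (f t x0) y0)
  (HM : 0 < M) (Hlen : forall c, 0 <= len c).

(* The orbit sequence coding the word b: even pieces are y0 for time 0, the
   piece 2i+1 is the x0-orbit for time len (b i). *)
Definition coded_points (j : nat) : X := if Nat.even j then y0 else x0.

Definition coded_lengths (b : nat -> bool) (j : nat) : R :=
  if Nat.even j then 0 else len (b (Nat.div2 j)).

Lemma coded_at_even (b : nat -> bool) (i : nat) :
  coded_points (2 * i) = y0 /\ coded_lengths b (2 * i) = 0.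
Proof. unfold coded_points, coded_lengths. now rewrite Nat.even_even. Qed.

Lemma coded_at_odd (b : nat -> bool) (i : nat) :
  coded_points (S (2 * i)) = x0 /\ coded_lengths b (S (2 * i)) = len (b i).
Proof.
  unfold coded_points, coded_lengths.
  replace (S (2 * i)) with (2 * i + 1)%nat by lia.
  rewrite Nat.even_odd, Nat.add_1_r, Nat.div2_succ_double. now split.
Qed.

Lemma shift_coded_odd (b : nat -> bool) (g : nat -> R) (i : nat) :
  shift (coded_lengths b) g (S (2 * i)) = shift (coded_lengths b) g (2 * i) + g (2 * i)%nat.
Proof. rewrite shift_succ, (proj2 (coded_at_even b i)). ring. Qed.

Lemma shift_coded_even (b : nat -> bool) (g : nat -> R) (i : nat) :
  shift (coded_lengths b) g (2 * S i)
  = shift (coded_lengths b) g (S (2 * i)) + len (b i) + g (S (2 * i)).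
Proof.
  replace (2 * S i)%nat with (S (S (2 * i))) by lia.
  now rewrite (shift_succ _ _ (S (2 * i))), (proj2 (coded_at_odd b i)).
Qed.

Section Shadowing_Point.
Variables (n : nat) (b : nat -> bool) (g : nat -> R) (gamma : R -> R) (z : X).
Hypotheses (Hg : forall j, (j + 1 < 2 * n + 1)%nat -> 0 <= g j <= M)
  (Hgamma : reparametrization M gamma)
  (Hshadow : shadowed d f (2 * n + 1) coded_points (coded_lengths b) g gamma (e0 / 3) z).

Let tau (i : nat) : R := gamma (shift (coded_lengths b) g (2 * i)).

Lemma coded_shift_nonneg (j : nat) : (j <= 2 * n)%nat -> 0 <= shift (coded_lengths b) g j.
Proof.
  apply shift_nonneg. intros i Hi. split; [|apply Hg; lia].
  unfold coded_lengths. destruct (Nat.even i); [lra|apply Hlen].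
Qed.

Lemma coded_spacing (i : nat) : (i < n)%nat ->
  len (b i) / M <= tau (S i) - tau i <= M * (len (b i) + 2 * M).
Proof.
  intros Hi. unfold tau. rewrite shift_coded_even, shift_coded_odd.
  set (S0 := shift (coded_lengths b) g (2 * i)).
  assert (HS0 : 0 <= S0) by (apply coded_shift_nonneg; lia).
  destruct (Hg (2 * i)%nat) as [Hg1 Hg1']; [lia|].
  destruct (Hg (S (2 * i))) as [Hg2 Hg2']; [lia|].
  pose proof (Hlen (b i)).
  destruct (reparam_increment M gamma HM Hgamma S0
              (S0 + g (2 * i)%nat + len (b i) + g (S (2 * i)))) as [Hlow Hup]; [lra|lra|].
  split.
  - eapply Rle_trans; [|exact Hlow]. unfold Rdiv.
    apply Rmult_le_compat_r; [left; apply Rinv_0_lt_compat; lra|lra].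
  - eapply Rle_trans; [exact Hup|]. apply Rmult_le_compat_l; lra.
Qed.

(* At every visit time the shadowing point follows a y0-piece. *)
Lemma coded_near (i : nat) : (i <= n)%nat -> d (f (tau i) z) y0 < e0 / 3.
Proof.
  intros Hi. destruct (coded_at_even b i) as [Hpt Hlen0].
  pose proof (Hshadow (2 * i)%nat ltac:(lia) 0 ltac:(rewrite Hlen0; lra)) as Hclose.
  rewrite Rplus_0_r, Hf0, Hpt in Hclose. exact Hclose.
Qed.

(* Between visits, apart from the gap margins, the shadowing point follows the
   x0-orbit, which stays e0-far from y0. *)
Lemma coded_far (i : nat) : (i < n)%nat ->
  forall s, tau i + M * M < s < tau (S i) - M * M -> 2 * (e0 / 3) < d (f s z) y0.
Proof.
  intros Hi s Hs. unfold tau in Hs. rewrite shift_coded_even, shift_coded_odd in Hs.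
  set (S0 := shift (coded_lengths b) g (2 * i)) in *.
  set (a := S0 + g (2 * i)%nat) in *.
  assert (HS0 : 0 <= S0) by (apply coded_shift_nonneg; lia).
  destruct (Hg (2 * i)%nat) as [Hg1 Hg1']; [lia|].
  destruct (Hg (S (2 * i))) as [Hg2 Hg2']; [lia|].
  pose proof (Hlen (b i)).
  assert (Hstart : gamma a <= gamma S0 + M * M).
  { destruct (reparam_increment M gamma HM Hgamma S0 a) as [_ Hup]; [lra|unfold a; lra|].
    assert (M * (a - S0) <= M * M) by (apply Rmult_le_compat_l; unfold a; lra). lra. }
  assert (Hend : gamma (a + len (b i) + g (S (2 * i))) - M * M <= gamma (a + len (b i))).
  { destruct (reparam_increment M gamma HM Hgamma (a + len (b i))
                (a + len (b i) + g (S (2 * i)))) as [_ Hup]; [unfold a; lra|lra|].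
    assert (M * (a + len (b i) + g (S (2 * i)) - (a + len (b i))) <= M * M)
      by (apply Rmult_le_compat_l; lra). lra. }
  destruct (reparam_ivt M gamma HM Hgamma a (a + len (b i)) s) as [u [Hu Hgu]];
    [unfold a; lra|lra|].
  destruct (coded_at_odd b i) as [Hpt Hlen1].
  pose proof (Hshadow (S (2 * i)) ltac:(lia) (u - a) ltac:(rewrite Hlen1; lra)) as Hclose.
  rewrite shift_coded_odd, Hpt in Hclose. fold S0 a in Hclose.
  replace (a + (u - a)) with u in Hclose by ring. rewrite Hgu in Hclose.
  pose proof (Hfar (u - a) ltac:(lra)).
  pose proof (metric_reverse_triangle d (f s z) (f (u - a) x0) y0 Hd). lra.
Qed.

Lemma coded_shadow_schedule :
  visit_schedule X d f y0 (e0 / 3) (M * M) (fun c => len c / M)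
    (fun c => M * (len c + 2 * M)) n b z tau.
Proof.
  split; [|split; [|split]].
  - unfold tau. simpl. now destruct Hgamma.
  - exact coded_spacing.
  - exact coded_near.
  - exact coded_far.
Qed.

End Shadowing_Point.

Hypothesis Hglue : forall (k : nat) (x : nat -> X) (m : nat -> R),
  (1 <= k)%nat -> (forall j, (j < k)%nat -> 0 <= m j) ->
  exists (g : nat -> R) (gamma : R -> R) (z : X),
    (forall j, (j + 1 < k)%nat -> 0 <= g j <= M) /\
    reparametrization M gamma /\
    shadowed d f k x m g gamma (e0 / 3) z.

Lemma coded_schedule_exists (n : nat) (b : nat -> bool) :
  exists z tau, visit_schedule X d f y0 (e0 / 3) (M * M) (fun c => len c / M)
                  (fun c => M * (len c + 2 * M)) n b z tau.
Proof.
  destruct (Hglue (2 * n + 1) coded_points (coded_lengths b)) as (g & gamma & z & Hg & Hgamma & Hsh).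
  - lia.
  - intros j _. unfold coded_lengths. destruct (Nat.even j); [lra|apply Hlen].
  - exists z. eexists. exact (coded_shadow_schedule n b g gamma z Hg Hgamma Hsh).
Qed.

Hypotheses (Hlo : forall c, 2 * (M * M) < len c / M)
  (Hgap : 2 * (M * M) + M * (len false + 2 * M) < len true / M)
  (Hmono : len false <= len true).

Lemma coded_separated_family (n : nat) :
  0 < e0 ->
  exists E, separated d f (INR n * (M * (len true + 2 * M))) (e0 / 3) E
            /\ length E = (2 ^ n)%nat.
Proof.
  intros He0.
  assert (Hschedules : forall k, exists z tau,
            visit_schedule X d f y0 (e0 / 3) (M * M) (fun c => len c / M)
              (fun c => M * (len c + 2 * M)) n (Nat.testbit k) z tau)
    by (intros k; apply coded_schedule_exists).
  set (Z k := proj1_sig (constructive_indefinite_description _ (Hschedules k))).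
  assert (HZ : forall k, exists tau,
            visit_schedule X d f y0 (e0 / 3) (M * M) (fun c => len c / M)
              (fun c => M * (len c + 2 * M)) n (Nat.testbit k) (Z k) tau)
    by (intros k; exact (proj2_sig (constructive_indefinite_description _ (Hschedules k)))).
  exists (map Z (seq 0 (2 ^ n))). split; [|now rewrite length_map, length_seq].
  apply separated_of_indexed; [exact Hd|lra|].
  intros k k' Hk Hk' Hne.
  destruct (HZ k) as [tau Htau]. destruct (HZ k') as [tau' Htau'].
  eapply schedules_separate; [| | | exact Hd | | exact Htau | exact Htau' | ].
  - apply Rmult_le_pos; lra.
  - exact Hlo.
  - exact Hgap.
  - intros []; cbn beta; [lra|]. apply Rmult_le_compat_l; lra.
  - now apply testbit_distinct.
Qed.

End Coded_Orbits.

Lemma segment_lengths_exist (M Q : R) :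
  0 < M -> 0 <= Q ->
  exists len : bool -> R,
    (forall c, 0 <= len c) /\ len false <= len true /\
    (forall c, 2 * Q < len c / M) /\ 2 * Q + M * (len false + 2 * M) < len true / M.
Proof.
  intros HM HQ.
  set (short := (2 * Q + 1) * M).
  set (long := short + (2 * Q + M * (short + 2 * M) + 1) * M).
  assert (Hshort : 0 <= short) by (unfold short; apply Rmult_le_pos; lra).
  assert (Hstep : 0 <= M * (short + 2 * M)) by (apply Rmult_le_pos; lra).
  assert (Hextra : 0 <= (2 * Q + M * (short + 2 * M) + 1) * M) by (apply Rmult_le_pos; lra).
  assert (Eshort : short / M = 2 * Q + 1) by (unfold short; field; lra).
  assert (Elong : long / M = short / M + (2 * Q + M * (short + 2 * M) + 1))
    by (unfold long; field; lra).
  exists (fun c : bool => if c then long else short).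
  split; [intros []; unfold long; lra|].
  split; [unfold long; lra|].
  split; [intros []; rewrite ?Elong, ?Eshort; lra|].
  rewrite Elong, Eshort. lra.
Qed.

Lemma far_orbit_exponential_separation {X : Type} (d : X -> X -> R) (f : R -> X -> X)
  (x0 y0 : X) (e0 : R) :
  is_metric d -> is_semiflow d f -> weak_reparam_gluing d f -> 0 < e0 ->
  (forall t, 0 <= t -> e0 <= d (f t x0) y0) ->
  exists H, 0 < H /\
    forall n, exists E, separated d f (INR n * H) (e0 / 3) E /\ length E = (2 ^ n)%nat.
Proof.
  intros Hd [Hf0 _] Hglue He0 Hfar.
  destruct (Hglue (e0 / 3)) as [M [HM Hshadow]]; [lra|].
  destruct (segment_lengths_exist M (M * M)) as (len & Hlen & Hmono & Hlo & Hgap);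
    [exact HM|apply Rmult_le_pos; lra|].
  exists (M * (len true + 2 * M)). split.
  - apply Rmult_lt_0_compat; [exact HM|]. pose proof (Hlen true). lra.
  - intros n. eapply coded_separated_family; eauto.
Qed.

Theorem theorem1p1 (X : Type) (d : X -> X -> R) (f : R -> X -> X) :
  is_metric d -> compact_metric d -> is_semiflow d f ->
  weak_reparam_gluing d f ->
  minimal d f \/ positive_entropy d f.
Proof.
  intros Hd _ Hf Hglue.
  destruct (classic (minimal d f)) as [Hmin|Hnotmin]; [left; exact Hmin|right].
  destruct (not_minimal_far_orbit d f Hnotmin) as (x0 & y0 & e0 & He0 & Hfar).
  destruct (far_orbit_exponential_separation d f x0 y0 e0 Hd Hf Hglue He0 Hfar)
    as (H & HH & Hfamily).
  apply (exponential_separation_entropy d f (e0 / 3) H); [lra|exact HH|exact Hfamily].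
Qed.
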